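(* Let $X,X_1,X_2,\dots$ be i.i.d. positive random variables with $\mathbb{E}X=1$ and $\mathbb{E}X^2<\infty$, let $p\ge2$ be an integer, and let $T_n=\frac{X_1^2+\dots+X_n^2}{X_1+\dots+X_n}$. If the sequence $(\mathbb{E}T_n^p)_n$ is bounded, then $\mathbb{E}X^p<\infty$. Moreover, for every $n\ge2$, $$\mathbb{E}\,\frac{X_1^{2p}}{\left(\frac1n(X_1+X_2+\dots+X_n)\right)^p}\ \ge\ 2^{-p}n^p\,\mathbb{E}\left[X^p1_{\{X\ge n\}}\right].$$ *)

From HB Require Import structures.
From mathcomp Require Import all_boot all_order all_algebra.
From mathcomp Require Import all_classical all_reals all_analysis.
Set Implicit Arguments. Unset Strict Implicit. Unset Printing Implicit Defensive.
Import Order.TTheory GRing.Theory Num.Theory.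
Local Open Scope classical_set_scope.
Local Open Scope ring_scope.

Definition mutually_independent {d} {T : measurableType d} {R : realType}
  (P : probability T R) (X : nat -> T -> R) : Prop :=
  forall (I : seq nat) (B : nat -> set R), uniq I ->
    (forall i, measurable (B i)) ->
    P (\bigcap_(i in [set` I]) (X i @^-1` B i)) =
    (\prod_(i <- I) P (X i @^-1` B i))%E.

Definition identically_distributed {d} {T : measurableType d} {R : realType}
  (P : probability T R) (X : nat -> T -> R) : Prop :=
  forall (i : nat) (B : set R), measurable B ->
    P (X i @^-1` B) = P (X 0%N @^-1` B).

Definition iid {d} {T : measurableType d} {R : realType}
  (P : probability T R) (X : nat -> T -> R) : Prop :=
  [/\ forall i, measurable_fun setT (X i),
      identically_distributed P X & mutually_independent P X].

(* S_n = X_1 + ... + X_n  (the sequence X is indexed X 0 = X, X 1, X 2, ...) *)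
Definition Ssum {T : Type} {R : realType} (X : nat -> T -> R) (n : nat) (t : T) : R :=
  \sum_(1 <= i < n.+1) X i t.

Definition Tn {T : Type} {R : realType} (X : nat -> T -> R) (n : nat) (t : T) : R :=
  (\sum_(1 <= i < n.+1) X i t ^+ 2) / Ssum X n t.

(* Write S_n = X_1 + S' with S' = X_2 + ... + X_n, which is independent of X_1 and has
   mean n - 1.  For fixed x > 0 the map y |-> (x + y)^-p is convex, so it lies above its
   tangent at y = n - 1.  The tangent is affine in y, so after multiplying by w(X_1) and
   integrating, independence replaces S' by its mean:
     E[w(X_1) / (X_1 + S')^p] >= E[w(X_1) / (X_1 + n - 1)^p].
   Taking w(x) = x^(2p) on [n, K] (the truncation keeps every expectation finite, and
   K -> oo by monotone convergence) and using x + n - 1 <= 2x there gives the second claim.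
   For n = 2 the left-hand side is at most 2^p E[T_2^p], so E[X^p 1_{X >= 2}] is bounded,
   and therefore so is E[X^p]. *)

From HB Require Import structures.
From mathcomp Require Import all_boot all_order all_algebra.
From mathcomp Require Import all_classical all_reals all_analysis measurable_realfun.
From mathcomp Require Import ring lra.
Import Order.TTheory GRing.Theory Num.Theory.
Local Open Scope classical_set_scope.
Local Open Scope ring_scope.
Set Implicit Arguments. Unset Strict Implicit. Unset Printing Implicit Defensive.

Section power_inequalities.
Variable R : realFieldType.

Lemma young_expn (a b : R) p : 0 <= a -> 0 <= b ->
  p.+1%:R * a * b ^+ p <= a ^+ p.+1 + p%:R * b ^+ p.+1.
Proof.
move=> a0 b0; elim: p => [|p IH]; first by rewrite mul1r expr1 expr0 mulr1 mul0r addr0.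
have monotone_gap : 0 <= (a ^+ p.+1 - b ^+ p.+1) * (a - b).
  have [ab|/ltW ba] := leP a b.
    by apply: mulr_le0; rewrite subr_le0 //; apply: lerXn2r; rewrite ?nnegrE.
  by apply: mulr_ge0; rewrite subr_ge0 //; apply: lerXn2r; rewrite ?nnegrE.
have := ler_wpM2r b0 IH; rewrite !exprS -!natr1 in monotone_gap *.
have : 0 <= p%:R :> R by []; nra.
Qed.

Lemma div_expn_tangent_le (x y m w : R) p : 0 < x -> 0 <= y -> 0 <= m -> 0 <= w ->
  w / (x + m) ^+ p + p%:R * (w / (x + m) ^+ p.+1) * m <=
  w / (x + y) ^+ p + p%:R * (w / (x + m) ^+ p.+1) * y.
Proof.
move=> x0 y0 m0 w0.
have a0 : 0 < x + m by rewrite ltr_wpDr.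
have b0 : 0 < x + y by rewrite ltr_wpDr.
rewrite -subr_ge0.
have -> : w / (x + y) ^+ p + p%:R * (w / (x + m) ^+ p.+1) * y -
          (w / (x + m) ^+ p + p%:R * (w / (x + m) ^+ p.+1) * m) =
    w / ((x + m) ^+ p.+1 * (x + y) ^+ p) *
    ((x + m) ^+ p.+1 + p%:R * (x + y) ^+ p.+1 - p.+1%:R * (x + m) * (x + y) ^+ p).
  move: (lt0r_neq0 a0) (lt0r_neq0 b0) (expf_neq0 p (lt0r_neq0 a0)) (expf_neq0 p (lt0r_neq0 b0)).
  rewrite !exprS -natr1; move: ((x + m) ^+ p) ((x + y) ^+ p) => A B.
  by move=> an0 bn0 An0 Bn0; field; rewrite ?an0 ?bn0 ?An0 ?Bn0.
apply: mulr_ge0; last by rewrite subr_ge0 young_expn ?ltW.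
by apply: divr_ge0 => //; apply: mulr_ge0; apply: exprn_ge0; exact: ltW.
Qed.

Lemma half_expn_le_div_shift (x m : R) p : 0 < x -> 0 <= m <= x ->
  2^-p * x ^+ p <= x ^+ (2 * p) / (x + m) ^+ p.
Proof.
move=> x0 /andP[m0 mx].
have shift_le : (x + m) ^+ p <= (2 * x) ^+ p.
  apply: lerXn2r; rewrite ?nnegrE ?mulr_natl ?mulr2n ?lerD2l //.
  - by rewrite addr_ge0 // ltW.
  - by rewrite addr_ge0 // ltW.
rewrite ler_pdivlMr ?exprn_gt0 ?ltr_wpDr //.
apply: le_trans (ler_wpM2l _ shift_le) _; first by rewrite mulr_ge0 ?invr_ge0 ?exprn_ge0 ?ltW.
by rewrite exprMn mulrACA mulVf ?expf_neq0 // mul1r -exprD addnn -mul2n.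
Qed.

Lemma div_expn_le (x y K : R) k j : 0 <= x <= K -> 1 <= y -> x ^+ k / y ^+ j <= K ^+ k.
Proof.
move=> /andP[x0 xK] y1; rewrite ler_pdivrMr ?exprn_gt0 ?(lt_le_trans ltr01) //.
apply: (@le_trans _ _ (K ^+ k)); first by apply: lerXn2r; rewrite ?nnegrE ?(le_trans x0).
by rewrite ler_peMr ?exprn_ge0 ?exprn_ege1 ?(le_trans x0).
Qed.

Lemma expr_div_mean_le (k s x q : R) p : 0 < k -> 0 < s -> 0 <= x -> x ^+ 2 <= q ->
  x ^+ (2 * p) / (k^-1 * s) ^+ p <= k ^+ p * (q / s) ^+ p.
Proof.
move=> k0 s0 x0 xq; rewrite exprMn exprVn invfM invrK mulrCA expr_div_n.
apply: ler_wpM2l; first by rewrite exprn_ge0 ?ltW.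
apply: ler_wpM2r; first by rewrite invr_ge0 exprn_ge0 ?ltW.
by rewrite exprM; apply: lerXn2r; rewrite ?nnegrE ?sqr_ge0 // (le_trans _ xq) ?sqr_ge0.
Qed.
End power_inequalities.

Lemma indic_itvcc (R : realType) (a b x : R) :
  \1_[set y | a <= y] x * \1_[set y | y <= b] x = \1_[set` `[a, b]] x :> R.
Proof.
rewrite -[LHS]/((\1_[set y | a <= y] \* \1_[set y | y <= b]) x) -indicI.
by congr (\1_ _ _); apply/seteqP; split=> y /=; rewrite in_itv /= => /andP.
Qed.

Definition trunc_weight {R : realType} (a K : R) (p : nat) (x : R) : R :=
  x ^+ (2 * p) * \1_[set` `[a, K]] x.

Lemma trunc_weight_ge0 (R : realType) (a K : R) p x : 0 <= trunc_weight a K p x.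
Proof. by rewrite mulr_ge0 // exprM exprn_ge0 ?sqr_ge0. Qed.

Lemma trunc_weight_le (R : realType) (a K : R) p x : trunc_weight a K p x <= x ^+ (2 * p).
Proof.
by rewrite ler_piMr ?indicE ?lern1 ?leq_b1 // exprM exprn_ge0 ?sqr_ge0.
Qed.

Lemma measurable_inv (R : realType) : measurable_fun [set: R] (@GRing.inv R).
Proof.
rewrite (_ : [set: R] = [set 0] `|` [set x | x != 0]); last first.
  by apply/seteqP; split => x //= _; case: (eqVneq x 0) => [->|x0]; [left|right].
apply/measurable_funU; [exact: measurable_set1| apply: open_measurable; exact: open_neq|].
split; first exact: measurable_fun_set1.
apply: open_continuous_measurable_fun; first exact: open_neq.
by move=> x; rewrite inE => x0; exact: inv_continuous.
Qed.

Ltac measurable_real :=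
  repeat match goal with
  | |- measurable_fun _ _ => solve [done | auto]
  | |- measurable_fun _ (fun _ => _ + _) => apply: measurable_funD
  | |- measurable_fun _ (fun _ => _ * _) => apply: measurable_funM
  | |- measurable_fun _ (fun _ => _ ^+ _) => apply: measurable_funX
  | |- measurable_fun _ (fun _ => _^-1) => apply: (measurableT_comp (@measurable_inv _))
  | |- measurable_fun _ (fun _ => \sum_(_ <- _ | _) _) => apply: measurable_sum => ?
  | |- measurable_fun _ (fun _ => _) =>
      first [exact: measurable_cst | exact: measurable_id | apply: measurableT_comp]
  end.

Lemma measurable_trunc_weight (R : realType) (a K : R) p :
  measurable_fun setT (trunc_weight a K p).
Proof.
rewrite /trunc_weight; apply: measurable_funM; first by measurable_real.
by apply: measurable_indic; exact: measurable_itv.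
Qed.

Section ge0_integral_real.
Context d (T : measurableType d) (R : realType) (P : probability T R).
Local Open Scope ereal_scope.

Lemma ge0_le_integral_EFin (f g : T -> R) : measurable_fun setT f -> measurable_fun setT g ->
  (forall t, 0 <= f t)%R -> (forall t, f t <= g t)%R ->
  \int[P]_t (f t)%:E <= \int[P]_t (g t)%:E.
Proof.
move=> mf mg f0 fg; apply: ge0_le_integral => //.
- by move=> t _; rewrite lee_fin.
- exact/measurable_EFinP.
- exact/measurable_EFinP.
- by move=> t _; rewrite lee_fin.
Qed.

Lemma ge0_integralD_EFin (f g : T -> R) : measurable_fun setT f -> measurable_fun setT g ->
  (forall t, 0 <= f t)%R -> (forall t, 0 <= g t)%R ->
  \int[P]_t (f t + g t)%:E = \int[P]_t (f t)%:E + \int[P]_t (g t)%:E.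
Proof.
move=> mf mg f0 g0; under eq_integral do rewrite EFinD.
apply: ge0_integralD => //.
- by move=> t _; rewrite lee_fin.
- exact/measurable_EFinP.
- by move=> t _; rewrite lee_fin.
- exact/measurable_EFinP.
Qed.

Lemma ge0_integralZl_real (k : R) (f : T -> R) : (0 <= k)%R -> measurable_fun setT f ->
  (forall t, 0 <= f t)%R -> \int[P]_t (k * f t)%:E = k%:E * \int[P]_t (f t)%:E.
Proof.
move=> k0 mf f0; under eq_integral do rewrite EFinM.
by apply: ge0_integralZl_EFin => // [t _|]; [rewrite lee_fin | exact/measurable_EFinP].
Qed.

Lemma integral_bounded_lty (f : T -> R) (C : R) : measurable_fun setT f ->
  (forall t, 0 <= f t)%R -> (forall t, f t <= C)%R -> \int[P]_t (f t)%:E < +oo.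
Proof.
move=> mf f0 fC; apply: (@le_lt_trans _ _ C%:E); last exact: ltry.
by rewrite -(expectation_cst P) unlock; apply: ge0_le_integral_EFin.
Qed.

Lemma independent_ge0_integralM (Y Z : T -> R) (f g : R -> R) :
  measurable_fun setT Y -> measurable_fun setT Z ->
  (forall A B, measurable A -> measurable B ->
     P (Y @^-1` A `&` Z @^-1` B) = P (Y @^-1` A) * P (Z @^-1` B)) ->
  measurable_fun setT f -> measurable_fun setT g ->
  (forall x, 0 <= f x)%R -> (forall x, 0 <= g x)%R ->
  \int[P]_t (f (Y t) * g (Z t))%:E = \int[P]_t (f (Y t))%:E * \int[P]_t (g (Z t))%:E.
Proof.
move=> mY mZ YZ mf mg f0 g0.
pose lawY := distribution P (mfun_Sub (mem_set mY)).
pose lawZ := distribution P (mfun_Sub (mem_set mZ)).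
pose YZt := mfun_Sub (mem_set (measurable_fun_pair mY mZ)).
have mfE : measurable_fun setT (EFin \o f) by exact/measurable_EFinP.
have mgE : measurable_fun setT (EFin \o g) by exact/measurable_EFinP.
have mfg : measurable_fun setT (fun z : R * R => (f z.1 * g z.2)%:E).
  apply/measurable_EFinP; apply: measurable_funM.
    exact: measurableT_comp mf measurable_fst.
  exact: measurableT_comp mg measurable_snd.
have lawYZ_prod : forall A, measurable A -> (lawY \x lawZ) A = distribution P YZt A.
  apply: product_measure_unique => A B mA mB /=.
  by rewrite /distribution /pushforward -YZ.
have fg0 z : 0 <= (f z.1 * g z.2)%:E by rewrite lee_fin mulr_ge0.
transitivity (\int[distribution P YZt]_z (f z.1 * g z.2)%:E).
  by rewrite ge0_integral_distribution.
rewrite -(eq_measure_integral _ (fun A mA _ => lawYZ_prod A mA)) fubini_tonelli1 //=.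
rewrite (eq_integral (fun x => (f x)%:E * \int[lawZ]_y (g y)%:E)); last first.
  move=> x _; rewrite /fubini_F /=; under eq_integral => y _ do rewrite EFinM.
  by rewrite ge0_integralZl_EFin // => y _; rewrite lee_fin.
rewrite ge0_integralZr //; last 2 first.
- by move=> y _; rewrite lee_fin.
- by apply: integral_ge0 => y _; rewrite lee_fin.
by rewrite !ge0_integral_distribution // => y; rewrite lee_fin.
Qed.

Lemma le_integral_truncation (f Y : T -> R) (L : \bar R) :
  measurable_fun setT f -> measurable_fun setT Y -> (forall t, 0 <= f t)%R ->
  (forall K : nat, \int[P]_t (f t * \1_[set s | Y s <= K%:R] t)%:E <= L) ->
  \int[P]_t (f t)%:E <= L.
Proof.
move=> mf mY f0 truncL.
pose g (K : nat) t := (f t * \1_[set s | Y s <= K%:R] t)%:E.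
have mg K : measurable_fun setT (g K).
  apply/measurable_EFinP; apply: measurable_funM => //; apply: measurable_indic.
  by rewrite -[X in measurable X]setTI; exact: measurable_fun_le.
have g0 K t : [set: T] t -> 0 <= g K t by rewrite lee_fin mulr_ge0.
have nd_g t : [set: T] t -> {homo g ^~ t : K1 K2 / (K1 <= K2)%N >-> K1 <= K2}.
  move=> _ K1 K2 K12; rewrite lee_fin ler_wpM2l // !indicE.
  have [YK1|] := boolP (t \in _); last by rewrite mulr0n.
  by rewrite mem_set //= (le_trans (set_mem YK1)) // ler_nat.
have lim_g t : limn (g ^~ t) = (f t)%:E.
  apply: lim_near_cst => //; exists (Num.truncn (Y t)).+1 => // K /= YK.
  rewrite /g indicE mem_set ?mulr1 //=.
  by rewrite ltW // (lt_le_trans (truncnS_gt _)) // ler_nat.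
rewrite (eq_integral (fun t => limn (g ^~ t))) => [|t _]; last by rewrite lim_g.
have g_cvg := @cvg_monotone_convergence _ _ _ P _ measurableT _ mg g0 nd_g.
rewrite -(cvg_lim _ g_cvg) //.
by apply: lime_le; [apply/cvg_ex; eexists; exact: g_cvg | exact: nearW].
Qed.

End ge0_integral_real.

Section random_sequence.
Context d (T : measurableType d) (R : realType) (P : probability T R).
Variable X : nat -> T -> R.
Hypothesis mX : forall i, measurable_fun setT (X i).
Local Open Scope ereal_scope.

Lemma mutually_independent_pair j k A B : mutually_independent P X -> j != k ->
  measurable A -> measurable B ->
  P (X j @^-1` A `&` X k @^-1` B) = P (X j @^-1` A) * P (X k @^-1` B).
Proof.
move=> HI jk mA mB; pose C i := if i == j then A else B.
have -> : X j @^-1` A `&` X k @^-1` B = \bigcap_(i in [set` [:: j; k]]) X i @^-1` C i.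
  apply/seteqP; split=> [t [XjA XkB] i|t XC].
    by rewrite /= !inE /C => /orP[]/eqP->; rewrite ?eqxx // eq_sym (negbTE jk).
  split; first by have := XC j; rewrite /= !inE /C eqxx; apply.
  by have := XC k; rewrite /= !inE /C eqxx orbT eq_sym (negbTE jk); apply.
rewrite HI /= ?inE ?jk // => [|i]; last by rewrite /C; case: ifP.
by rewrite !big_cons big_nil mule1 /C eqxx eq_sym (negbTE jk).
Qed.

Lemma identically_distributed_ge0_integral i (g : R -> R) : identically_distributed P X ->
  measurable_fun setT g -> (forall x, 0 <= g x)%R ->
  \int[P]_t (g (X i t))%:E = \int[P]_t (g (X 0%N t))%:E.
Proof.
move=> HD mg g0.
have mgE : measurable_fun setT (EFin \o g) by exact/measurable_EFinP.
have gE0 x : 0 <= (EFin \o g) x by rewrite lee_fin.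
rewrite -!(@ge0_integral_distribution _ _ _ _ _ _ (mfun_Sub (mem_set (mX _))) (EFin \o g)) //.
by apply: eq_measure_integral => A mA _; exact: HD.
Qed.

End random_sequence.

Definition tail_sum {T : Type} {R : realType} (X : nat -> T -> R) (n : nat) (t : T) : R :=
  \sum_(2 <= i < n.+1) X i t.

Lemma SsumE {T : Type} {R : realType} (X : nat -> T -> R) n t : (0 < n)%N ->
  Ssum X n t = X 1%N t + tail_sum X n t.
Proof. by move=> n0; rewrite /Ssum big_ltn. Qed.

Section positive_iid_mean_one.
Context d (T : measurableType d) (R : realType) (P : probability T R).
Variable X : nat -> T -> R.
Hypotheses (mX : forall i, measurable_fun setT (X i))
  (HD : identically_distributed P X) (HI : mutually_independent P X).
Hypothesis X_gt0 : forall i t, (0 < X i t)%R.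
Hypothesis integral_X0 : (\int[P]_t (X 0%N t)%:E = 1)%E.
Local Open Scope ereal_scope.

Let X_ge0 i t : (0 <= X i t)%R := ltW (X_gt0 i t).

Lemma tail_sum_ge0 n t : (0 <= tail_sum X n t)%R.
Proof. by apply: sumr_ge0 => i _; exact: ltW. Qed.

Lemma measurable_tail_sum n : measurable_fun setT (tail_sum X n).
Proof. exact: measurable_sum. Qed.

Lemma measurable_Ssum n : measurable_fun setT (Ssum X n).
Proof. exact: measurable_sum. Qed.
#[local] Hint Resolve measurable_tail_sum measurable_Ssum : core.

Lemma measurable_Tn n : measurable_fun setT (Tn X n).
Proof. by rewrite /Tn; measurable_real. Qed.
#[local] Hint Resolve measurable_Tn : core.

Lemma Ssum_gt0 n t : (0 < n)%N -> (0 < Ssum X n t)%R.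
Proof. by move=> n0; rewrite SsumE // ltr_wpDr ?tail_sum_ge0. Qed.

Lemma Tn_ge0 n t : (0 <= Tn X n t)%R.
Proof. by rewrite divr_ge0 // sumr_ge0 // => i _; exact: sqr_ge0. Qed.

Lemma integral_normX i : \int[P]_t (`|X i t|)%:E = 1.
Proof.
rewrite (identically_distributed_ge0_integral mX i (g := Num.norm) HD) //.
by rewrite -integral_X0; apply: eq_integral => t _; rewrite ger0_norm // ltW.
Qed.

Lemma integral_mulX j i (f : R -> R) : j != i -> measurable_fun setT f -> (forall x, 0 <= f x)%R ->
  \int[P]_t (f (X j t) * X i t)%:E = \int[P]_t (f (X j t))%:E.
Proof.
move=> ji mf f0.
under eq_integral do rewrite -[X i _]ger0_norm ?ltW //.
rewrite (independent_ge0_integralM (mX j) (mX i)) //.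
- by rewrite integral_normX mule1.
- by move=> A B mA mB; exact: mutually_independent_pair.
Qed.

Lemma integral_mul_tail_sum n (f : R -> R) : measurable_fun setT f -> (forall x, 0 <= f x)%R ->
  \int[P]_t (f (X 1%N t) * tail_sum X n t)%:E = (n - 1)%:R%:E * \int[P]_t (f (X 1%N t))%:E.
Proof.
move=> mf f0.
under eq_integral do rewrite /tail_sum mulr_sumr -sumEFin.
rewrite ge0_integral_sum //; last 2 first.
- by move=> i; apply/measurable_EFinP; measurable_real.
- by move=> i t _; rewrite lee_fin mulr_ge0 // ltW.
rewrite (eq_big_nat _ _ (F2 := fun=> \int[P]_t (f (X 1%N t))%:E)); last first.
  by move=> i /andP[i2 _]; apply: integral_mulX => //; rewrite neq_ltn (leq_trans _ i2).
by rewrite sumr_const_nat subSS mule_natl.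
Qed.

(* [w] is asked to vanish on the negative reals only so that the slope of the tangent
   below is nonnegative everywhere, as [independent_ge0_integralM] requires. *)
Lemma jensen_tail_sum n p (w : R -> R) : measurable_fun setT w ->
  (forall x, 0 <= w x)%R -> (forall x, x < 0 -> w x = 0)%R ->
  \int[P]_t (w (X 1%N t) / (X 1%N t + (n - 1)%:R) ^+ p.+1)%:E < +oo ->
  \int[P]_t (w (X 1%N t) / (X 1%N t + (n - 1)%:R) ^+ p)%:E <=
  \int[P]_t (w (X 1%N t) / (X 1%N t + tail_sum X n t) ^+ p)%:E.
Proof.
move=> mw w0 w_supp c_fin; set m : R := (n - 1)%:R.
pose c x := (w x / (x + m) ^+ p.+1)%R.
have c0 x : (0 <= c x)%R.
  rewrite /c; have [/w_supp->|x0] := ltP x 0%R; first by rewrite mul0r.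
  by rewrite divr_ge0 // exprn_ge0 // addr_ge0.
have mc : measurable_fun setT c by rewrite /c; measurable_real.
pose slope x := (p%:R * c x)%R.
have slope0 x : (0 <= slope x)%R by rewrite mulr_ge0.
have mslope : measurable_fun setT slope by rewrite /slope; measurable_real.
have slope_fin : \int[P]_t (slope (X 1%N t))%:E \is a fin_num.
  rewrite ge0_fin_numE ?integral_ge0 // => [|t _]; last by rewrite lee_fin.
  by rewrite ge0_integralZl_real ?lte_mul_pinfty //; measurable_real.
have mean_term : \int[P]_t (slope (X 1%N t) * m)%:E = m%:E * \int[P]_t (slope (X 1%N t))%:E.
  by under eq_integral do rewrite mulrC; rewrite ge0_integralZl_real //; measurable_real.
have mean0 t : (0 <= w (X 1%N t) / (X 1%N t + m) ^+ p)%R.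
  by rewrite divr_ge0 ?exprn_ge0 ?addr_ge0 ?w0 ?X_ge0.
have tail_term0 t : (0 <= w (X 1%N t) / (X 1%N t + tail_sum X n t) ^+ p)%R.
  by rewrite divr_ge0 ?exprn_ge0 ?addr_ge0 ?w0 ?X_ge0 ?tail_sum_ge0.
have tangent_le : \int[P]_t (w (X 1%N t) / (X 1%N t + m) ^+ p + slope (X 1%N t) * m)%:E <=
    \int[P]_t (w (X 1%N t) / (X 1%N t + tail_sum X n t) ^+ p + slope (X 1%N t) * tail_sum X n t)%:E.
  apply: ge0_le_integral_EFin; [measurable_real|measurable_real| |].
  - by move=> t /=; rewrite addr_ge0 ?mean0 // mulr_ge0 ?slope0.
  - by move=> t /=; rewrite /slope /c div_expn_tangent_le ?tail_sum_ge0.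
rewrite !ge0_integralD_EFin ?mean_term ?integral_mul_tail_sum -/m // in tangent_le.
- by rewrite leeD2rE ?fin_numM in tangent_le.
all: by [measurable_real | move=> t; rewrite mulr_ge0 ?tail_sum_ge0].
Qed.
Lemma jensen_trunc_weight n p (K : R) : (2 <= n)%N ->
  \int[P]_t (trunc_weight n%:R K p (X 1%N t) / (X 1%N t + (n - 1)%:R) ^+ p)%:E <=
  \int[P]_t (trunc_weight n%:R K p (X 1%N t) / (X 1%N t + tail_sum X n t) ^+ p)%:E.
Proof.
move=> n2; have n_gt0 : (0 < n%:R :> R)%R by rewrite ltr0n (leq_trans _ n2).
have mw := measurable_trunc_weight n%:R K p.
apply: jensen_tail_sum => //.
- exact: trunc_weight_ge0.
- by move=> x x0; rewrite /trunc_weight indicE mem_setE in_itv /= leNgt (lt_trans x0 n_gt0) mulr0.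
apply: (@integral_bounded_lty _ _ _ _ _ (K ^+ (2 * p))); [measurable_real| |].
  by move=> t /=; rewrite divr_ge0 ?exprn_ge0 ?addr_ge0 ?trunc_weight_ge0 ?X_ge0.
move=> t /=; rewrite /trunc_weight mulrAC indicE mem_setE in_itv /=.
case: andP => [[nx xK]|_]; last by rewrite mulr0 exprM exprn_ge0 ?sqr_ge0.
rewrite mulr1 div_expn_le ?X_ge0 // -[1%R]addr0 lerD //.
by rewrite (le_trans _ nx) // ler1n (leq_trans _ n2).
Qed.

Lemma truncated_moment_le n p (K : R) : (2 <= n)%N ->
  \int[P]_t (2^-p * n%:R ^+ p * (X 1%N t ^+ p * \1_[set` `[n%:R, K]%R] (X 1%N t)))%:E <=
  \int[P]_t (X 1%N t ^+ (2 * p) / (n%:R^-1 * Ssum X n t) ^+ p)%:E.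
Proof.
move=> n2; set w := trunc_weight n%:R K p.
have mw : measurable_fun setT w := measurable_trunc_weight n%:R K p.
have npow0 : (0 <= n%:R ^+ p :> R)%R by rewrite exprn_ge0.
have mean_term0 t : (0 <= w (X 1%N t) / (X 1%N t + (n - 1)%:R) ^+ p)%R.
  by rewrite divr_ge0 ?exprn_ge0 ?addr_ge0 ?trunc_weight_ge0 ?X_ge0.
have tail_term0 t : (0 <= w (X 1%N t) / (X 1%N t + tail_sum X n t) ^+ p)%R.
  by rewrite divr_ge0 ?exprn_ge0 ?addr_ge0 ?trunc_weight_ge0 ?X_ge0 ?tail_sum_ge0.
apply: (@le_trans _ _ ((n%:R ^+ p)%:E * \int[P]_t (w (X 1%N t) / (X 1%N t + (n - 1)%:R) ^+ p)%:E)).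
  rewrite -ge0_integralZl_real //; [|measurable_real].
  apply: ge0_le_integral_EFin; [measurable_real|measurable_real|by move=> t; rewrite !mulr_ge0 ?exprn_ge0|].
  move=> t; rewrite /w /trunc_weight !indicE mem_setE in_itv /=.
  case: andP => [[nx _]|_]; last by rewrite !(mulr0, mul0r).
  rewrite !mulr1 mulrAC mulrC ler_pM2l ?exprn_gt0 ?ltr0n ?(leq_trans _ n2) //.
  by rewrite half_expn_le_div_shift ?X_gt0 ?ler0n // (le_trans _ nx) // ler_nat leq_subr.
apply: (le_trans (lee_wpmul2l (npow0 : 0 <= (n%:R ^+ p)%:E) (jensen_trunc_weight p K n2))).
rewrite -ge0_integralZl_real //; [|measurable_real].
apply: ge0_le_integral_EFin; [measurable_real|measurable_real|by move=> t; rewrite mulr_ge0|].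
move=> t; rewrite (SsumE _ _ (leq_trans _ n2)) // exprMn exprVn invfM invrK mulrCA.
apply: ler_wpM2r; last exact: trunc_weight_le.
by rewrite divr_ge0 ?exprn_ge0 ?addr_ge0 ?X_ge0 ?tail_sum_ge0.
Qed.

Lemma moment_tail_le n p : (2 <= n)%N ->
  (2^-p * n%:R ^+ p)%:E * \int[P]_t (X 0%N t ^+ p * \1_[set s | n%:R <= X 0%N s] t)%:E <=
  \int[P]_t (X 1%N t ^+ (2 * p) / (n%:R^-1 * Ssum X n t) ^+ p)%:E.
Proof.
move=> n2; set N := [set x : R | n%:R <= x]%R.
have n_gt0 : (0 < n%:R :> R)%R by rewrite ltr0n (leq_trans _ n2).
have mN : measurable_fun setT (\1_N : R -> R).
  by apply: measurable_indic; rewrite -[X in measurable X]setTI; exact: measurable_fun_le.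
have moment0 x : (0 <= x ^+ p * \1_N x)%R.
  rewrite indicE; case: (boolP (x \in N)) => [|_]; last by rewrite mulr0.
  by rewrite inE /= => nx; rewrite mulr1 exprn_ge0 // (le_trans (ltW n_gt0)).
have c0 : (0 <= 2^-p * n%:R ^+ p :> R)%R by rewrite mulr_ge0 ?invr_ge0 ?exprn_ge0.
have -> : \int[P]_t (X 0%N t ^+ p * \1_[set s | n%:R <= X 0%N s] t)%:E =
          \int[P]_t (X 1%N t ^+ p * \1_N (X 1%N t))%:E.
  by rewrite (identically_distributed_ge0_integral mX 1 (g := fun x => x ^+ p * \1_N x)%R HD) //; measurable_real.
rewrite -ge0_integralZl_real //; last by measurable_real.
apply: (le_integral_truncation (Y := X 1%N)) => [||t|K]; [measurable_real|exact: mX|by rewrite mulr_ge0|].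
rewrite (eq_integral (fun t => (2^-p * n%:R ^+ p * (X 1%N t ^+ p * \1_[set` `[n%:R, K%:R]%R] (X 1%N t)))%:E)).
  exact: truncated_moment_le.
by move=> t _; rewrite -!mulrA -indic_itvcc.
Qed.

Lemma integral_div_mean_le_Tn n p : (0 < n)%N ->
  \int[P]_t (X 1%N t ^+ (2 * p) / (n%:R^-1 * Ssum X n t) ^+ p)%:E <=
  (n%:R ^+ p)%:E * \int[P]_t (Tn X n t ^+ p)%:E.
Proof.
move=> n0; rewrite -ge0_integralZl_real ?exprn_ge0 //; [|measurable_real|by move=> t; rewrite exprn_ge0 ?Tn_ge0].
apply: ge0_le_integral_EFin; [measurable_real|measurable_real| |].
  by move=> t; rewrite divr_ge0 ?exprn_ge0 ?mulr_ge0 ?invr_ge0 ?(ltW (X_gt0 1 t)) ?(ltW (Ssum_gt0 _ n0)).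
move=> t; rewrite expr_div_mean_le ?ltr0n ?Ssum_gt0 ?(ltW (X_gt0 1 t)) //.
rewrite big_ltn // lerDl sumr_ge0 // => i _; exact: sqr_ge0.
Qed.

Lemma moment_lty_of_bounded_Tn p :
  (exists M : R, forall n, \int[P]_t (Tn X n t ^+ p)%:E <= M%:E) ->
  \int[P]_t (X 0%N t ^+ p)%:E < +oo.
Proof.
case=> M TnM.
set N := [set s | 2%:R <= X 0%N s]%R.
have mN : measurable_fun setT (\1_N : T -> R).
  by apply: measurable_indic; rewrite -[X in measurable X]setTI; exact: measurable_fun_le.
have tail_le : \int[P]_t (X 0%N t ^+ p * \1_N t)%:E <= (2%:R ^+ p * M)%:E.
  have := @moment_tail_le 2 p isT; rewrite mulVf ?mul1e ?expf_neq0 ?pnatr_eq0 // => /le_trans; apply.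
  apply: le_trans (@integral_div_mean_le_Tn 2 p isT) _.
  by rewrite EFinM lee_wpmul2l ?lee_fin ?exprn_ge0.
have pow0 : (0 <= 2%:R ^+ p :> R)%R by rewrite exprn_ge0.
apply: (@le_lt_trans _ _ (\int[P]_t (X 0%N t ^+ p * \1_N t + 2%:R ^+ p)%:E)).
  apply: ge0_le_integral_EFin; [measurable_real|measurable_real|by move=> t; rewrite exprn_ge0 ?(ltW (X_gt0 _ _))|].
  move=> t; rewrite indicE; have [two_le|lt_two] := leP 2%:R (X 0%N t).
    by rewrite mem_set // mulr1 lerDl.
  rewrite memNset ?mulr0 ?add0r /=; last by rewrite ltNge in lt_two; exact/negP.
  by apply: lerXn2r; rewrite ?nnegrE ?(ltW (X_gt0 _ _)) ?ltW.
rewrite ge0_integralD_EFin //; [|measurable_real|by move=> t; rewrite mulr_ge0 ?exprn_ge0 ?(ltW (X_gt0 _ _))].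
have -> : \int[P]_t (2%:R ^+ p)%:E = (2%:R ^+ p)%:E by rewrite -[RHS](expectation_cst P) unlock.
by apply: le_lt_trans (leeD tail_le (lexx _)) _; rewrite -EFinD ltry.
Qed.
End positive_iid_mean_one.

Theorem lemma2 (d : measure_display) (T : measurableType d) (R : realType)
  (P : probability T R) (X : nat -> T -> R) (p : nat)
  (HX : iid P X)
  (Hpos : forall i t, 0 < X i t)
  (HE1 : (\int[P]_t (X 0%N t)%:E = 1)%E)
  (HE2 : (\int[P]_t (X 0%N t ^+ 2)%:E < +oo)%E)
  (Hp : (2 <= p)%N) :
  ((exists M : R, forall n : nat, (\int[P]_t (Tn X n t ^+ p)%:E <= M%:E)%E) ->
     (\int[P]_t (X 0%N t ^+ p)%:E < +oo)%E)
  /\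
  (forall n : nat, (2 <= n)%N ->
     (\int[P]_t (X 1%N t ^+ (2 * p) / (n%:R^-1 * Ssum X n t) ^+ p)%:E
      >= (2%:R ^- p * n%:R ^+ p)%:E *
         \int[P]_t (X 0%N t ^+ p * (\1_[set s | n%:R <= X 0%N s] t : R))%:E)%E).
Proof.
case: HX => mX HD HI; split.
- exact: moment_lty_of_bounded_Tn.
- by move=> n n2; exact: moment_tail_le.
Qed.
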